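(* Let $\mathbb{F}\in\{\mathbb{R},\mathbb{C}\}$, $\boldsymbol A\in\mathbb{F}^{m\times n}$, $k\in\{1,\dots,n\}$, and suppose there exist a map $\Delta:\mathbb{R}^m\to\mathbb{F}^n$ and $c_0>0$ with $\mathrm{dist}(\Delta(|\boldsymbol A\boldsymbol x|),\boldsymbol x)\le c_0\,\sigma_k(\boldsymbol x)_2$ for all $\boldsymbol x\in\mathbb{F}^n$. Then for every $\boldsymbol\eta\in\mathbb{F}^n$ with $\boldsymbol A\boldsymbol\eta=\boldsymbol 0$ and every $T\subset\{1,\dots,n\}$ with $\#T\le 2k$, \[ \|\boldsymbol\eta\|_2\le c_0\,\sigma_{2k}(\boldsymbol\eta)_2\le c_0\,\|\boldsymbol\eta_{T^c}\|_2 . \]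
   Context: $|\boldsymbol u|$ is the entrywise modulus. $\mathrm{dist}(\boldsymbol x,\boldsymbol y)=\min_{c\in\mathbb F,|c|=1}\|\boldsymbol x-c\boldsymbol y\|_2$. $\Sigma_s=\{\boldsymbol z\in\mathbb F^n:\|\boldsymbol z\|_0\le s\}$, $\sigma_s(\boldsymbol x)_2=\min_{\boldsymbol z\in\Sigma_s}\mathrm{dist}(\boldsymbol x,\boldsymbol z)$. For $T\subset\{1,\dots,n\}$, $\boldsymbol\eta_{T}$ is the vector agreeing with $\boldsymbol\eta$ on $T$ and zero elsewhere, and $T^c$ is the complement of $T$. *)

From HB Require Import structures.
From mathcomp Require Import all_boot all_order all_algebra.
From mathcomp Require Import boolp classical_sets reals.
From mathcomp Require Import complex.
Set Implicit Arguments. Unset Strict Implicit. Unset Printing Implicit Defensive.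
Import Order.TTheory GRing.Theory Num.Theory.
Local Open Scope ring_scope.

Section Defs.
(* R: the reals; F: the scalar field (R or R[i]); md : F -> R its modulus. *)
Variables (R : realType) (F : pzRingType) (md : F -> R).

Definition absv m (u : 'cV[F]_m) : 'cV[R]_m := \col_i md (u i 0).

Definition norm2 n (x : 'cV[F]_n) : R := Num.sqrt (\sum_i md (x i 0) ^+ 2).

(* dist(x,y) = min_{|c|=1} ||x - c y||_2  (the minimum is attained; we use inf) *)
Definition dist n (x y : 'cV[F]_n) : R :=
  inf [set norm2 (x - c *: y) | c in [set c : F | md c = 1]]%classic.

Definition norm0 n (z : 'cV[F]_n) : nat := #|[set i | z i 0 != 0]|.

Definition sigma n (s : nat) (x : 'cV[F]_n) : R :=
  inf [set dist x z | z in [set z : 'cV[F]_n | (norm0 z <= s)%N]]%classic.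

Definition restr n (T : {set 'I_n}) (eta : 'cV[F]_n) : 'cV[F]_n :=
  \col_i (if i \in T then eta i 0 else 0).
End Defs.

(* If [A eta = 0] and [T] is split into [T1] and [T2 := T :\: T1], both of size at most [k],
   then [eta_T1] and [eta - eta_T1] have the same measurements [|A x|], since their images
   under [A] are opposite.  Hence one output [D] of [Delta] is, up to a phase, exactly the
   [k]-sparse vector [eta_T1], and is within [c0 ||eta_(T^c)||] of [eta - eta_T1] up to a
   phase, because [eta - eta_T1 - eta_T2 = eta_(T^c)].  The two pieces have disjoint
   supports, so both phases can be undone at once and the triangle inequality gives the
   null space property [||eta|| <= c0 ||eta_(T^c)||].  Applied to the support of a
   [2k]-sparse [z], it bounds [||eta||] by [c0 ||eta - c z||], hence by [c0 sigma_2k(eta)]. *)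

From HB Require Import structures.
From mathcomp Require Import all_boot all_order all_algebra.
From mathcomp Require Import boolp classical_sets reals.
From mathcomp Require Import complex.
From mathcomp Require Import ring lra zify.
Import Order.TTheory GRing.Theory Num.Theory.
Set Implicit Arguments. Unset Strict Implicit. Unset Printing Implicit Defensive.
Local Open Scope ring_scope.

Section L2norm.
Variables (R : rcfType) (n : nat).
Implicit Types a b : 'I_n -> R.

Definition l2norm a : R := Num.sqrt (\sum_i a i ^+ 2).

Lemma l2norm_ge0 a : 0 <= l2norm a.
Proof. exact: sqrtr_ge0. Qed.

Lemma sqr_l2norm a : l2norm a ^+ 2 = \sum_i a i ^+ 2.
Proof. by rewrite sqr_sqrtr // sumr_ge0 // => i _; exact: sqr_ge0. Qed.

Lemma l2norm_eq0 a : l2norm a = 0 -> forall i, a i = 0.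
Proof.
move=> a0 i; apply/eqP; rewrite -sqrf_eq0; apply/eqP.
have sum0 : \sum_j a j ^+ 2 = 0 by rewrite -sqr_l2norm a0 expr0n.
exact: (psumr_eq0P (fun j _ => sqr_ge0 (a j)) sum0).
Qed.

Lemma ler_l2norm a b : (forall i, 0 <= a i <= b i) -> l2norm a <= l2norm b.
Proof.
move=> ab; rewrite ler_sqrt ?sumr_ge0 // => [|i _]; last exact: sqr_ge0.
by apply: ler_sum => i _; have /andP[a0 ?] := ab i; rewrite ler_pXn2r ?nnegrE ?(le_trans a0).
Qed.

Lemma l2norm_CauchySchwarz a b : \sum_i a i * b i <= l2norm a * l2norm b.
Proof.
have [A0|A_neq0] := eqVneq (l2norm a) 0.
  by rewrite A0 mul0r big1 // => i _; rewrite (l2norm_eq0 A0) mul0r.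
have [B0|B_neq0] := eqVneq (l2norm b) 0.
  by rewrite B0 mulr0 big1 // => i _; rewrite (l2norm_eq0 B0) mulr0.
have AB_gt0 : 0 < l2norm a * l2norm b by rewrite mulr_gt0 // lt0r ?A_neq0 ?B_neq0 l2norm_ge0.
rewrite -(ler_pM2r AB_gt0).
set A := l2norm a in AB_gt0 *; set B := l2norm b in AB_gt0 *.
(* AM-GM termwise: [2 (a_i B) (b_i A) <= (a_i B)^2 + (b_i A)^2] *)
have amgm i : 2 * (a i * b i) * (A * B) <= a i ^+ 2 * B ^+ 2 + b i ^+ 2 * A ^+ 2.
  by have := sqr_ge0 (a i * B - b i * A); nra.
have : \sum_i 2 * (a i * b i) * (A * B)
    <= \sum_i (a i ^+ 2 * B ^+ 2 + b i ^+ 2 * A ^+ 2) by apply: ler_sum => i _.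
rewrite big_split /= -!mulr_suml -!mulr_sumr -!sqr_l2norm -/A -/B.
nra.
Qed.

Lemma l2normD a b : l2norm (fun i => a i + b i) <= l2norm a + l2norm b.
Proof.
rewrite -ler_sqr ?nnegrE ?addr_ge0 ?l2norm_ge0 // sqrrD !sqr_l2norm.
have -> : \sum_i (a i + b i) ^+ 2
    = \sum_i a i ^+ 2 + \sum_i b i ^+ 2 + 2 * \sum_i a i * b i.
  by rewrite mulr_sumr -!big_split /=; apply: eq_bigr => i _; ring.
by rewrite -!sqr_l2norm; have := l2norm_CauchySchwarz a b; lra.
Qed.

End L2norm.

Lemma card_split_double (T : finType) (S : {set T}) k : (#|S| <= 2 * k)%N ->
  exists2 S1 : {set T}, S1 \subset S & (#|S1| <= k)%N && (#|S :\: S1| <= k)%N.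
Proof.
move=> card_S; pose S1 := [set x in take k (enum S)].
have card_S1 : #|S1| = minn k #|S|.
  by rewrite cardsE (card_uniqP (take_uniq _ (enum_uniq _))) size_take_min -cardE.
have sub_S1 : S1 \subset S.
  by apply/fintype.subsetP => x; rewrite inE => /mem_take; rewrite mem_enum.
exists S1 => //; rewrite cardsD (finset.setIidPr sub_S1) card_S1; apply/andP; split; lia.
Qed.

Section Modulus.
Variables (R : realType) (F : pzRingType) (md : F -> R).
Hypotheses (md0 : md 0 = 0) (md1 : md 1 = 1) (mdN : forall a, md (- a) = md a)
  (mdM : forall a b, md (a * b) = md a * md b)
  (ler_mdD : forall a b, md (a + b) <= md a + md b) (md_ge0 : forall a, 0 <= md a).
Variable n : nat.
Implicit Types (x y z eta : 'cV[F]_n) (S T : {set 'I_n}).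

Lemma norm2_ge0 x : 0 <= norm2 md x.
Proof. exact: l2norm_ge0. Qed.

Lemma ler_norm2 x y : (forall i, md (x i 0) <= md (y i 0)) -> norm2 md x <= norm2 md y.
Proof. by move=> xy; apply: ler_l2norm => i; rewrite md_ge0 xy. Qed.

Lemma eq_norm2 x y : (forall i, md (x i 0) = md (y i 0)) -> norm2 md x = norm2 md y.
Proof. by move=> xy; apply/le_anti; rewrite !ler_norm2 // => i; rewrite xy. Qed.

Lemma ler_norm2B x y : norm2 md (x - y) <= norm2 md x + norm2 md y.
Proof.
apply: le_trans (l2normD _ _); apply: ler_l2norm => i.
by rewrite !mxE md_ge0 -(mdN (y i 0)) ler_mdD.
Qed.

Lemma norm2_0 : norm2 md (0 : 'cV[F]_n) = 0.
Proof. by rewrite /norm2 big1 ?sqrtr0 // => i _; rewrite mxE md0 expr0n. Qed.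

Lemma absvN m (y : 'cV[F]_m) : absv md (- y) = absv md y.
Proof. by apply/matrixP => i j; rewrite !mxE mdN. Qed.

Lemma subr_restr S eta : eta - restr S eta = restr (~: S) eta.
Proof.
by apply/matrixP => i j; rewrite ord1 !mxE inE; case: (i \in S); rewrite ?subrr ?subr0.
Qed.

Lemma restr_setCB S T eta : S \subset T ->
  restr (~: S) eta - restr (T :\: S) eta = restr (~: T) eta.
Proof.
move=> sST; apply/matrixP => i j; rewrite !mxE !inE.
have [iS|_] := boolP (i \in S); first by rewrite (fintype.subsetP sST _ iS) subrr.
by case: (i \in T); rewrite ?subrr ?subr0.
Qed.

Lemma norm0_restr S eta : (norm0 (restr S eta) <= #|S|)%N.
Proof.
apply: subset_leq_card; apply/fintype.subsetP => i; rewrite inE mxE.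
by case: (i \in S); rewrite ?eqxx.
Qed.

Lemma lb_le_dist x y b : (forall c, md c = 1 -> b <= norm2 md (x - c *: y)) ->
  b <= dist md x y.
Proof.
move=> lb; apply: lb_le_inf => [|_ [c /lb ? <-]] //.
by exists (norm2 md (x - 1 *: y)), 1.
Qed.

Lemma dist_le_norm2 x y c : md c = 1 -> dist md x y <= norm2 md (x - c *: y).
Proof.
move=> c1; apply: ge_inf; last by exists c.
by exists 0 => _ [c' _ <-]; exact: norm2_ge0.
Qed.

Lemma dist_le_norm2B x y : dist md x y <= norm2 md (x - y).
Proof. by rewrite -{2}[y]scale1r dist_le_norm2. Qed.

Lemma lb_le_sigma s x b : (forall z, (norm0 z <= s)%N -> b <= dist md x z) ->
  b <= sigma md s x.
Proof.
move=> lb; apply: lb_le_inf => [|_ [z /lb ? <-]] //.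
have norm0_0 : norm0 (0 : 'cV[F]_n) = 0%N by apply: eq_card0 => i; rewrite !inE mxE eqxx.
by exists (dist md x 0), 0; rewrite //= norm0_0.
Qed.

Lemma sigma_le_dist s x z : (norm0 z <= s)%N -> sigma md s x <= dist md x z.
Proof.
move=> zs; apply: ge_inf; last by exists z.
by exists 0 => _ [z' _ <-]; apply: lb_le_dist => c _; exact: norm2_ge0.
Qed.

Lemma sigma_sparse s x : (norm0 x <= s)%N -> sigma md s x = 0.
Proof.
move=> xs; apply/le_anti/andP; split.
  by apply: le_trans (sigma_le_dist x xs) _; rewrite -norm2_0 -(subrr x) dist_le_norm2B.
by apply: lb_le_sigma => z _; apply: lb_le_dist => c _; exact: norm2_ge0.
Qed.

Lemma norm2_le_dist_restr (D : 'cV[F]_n) S eta :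
  norm2 md eta <= dist md D (restr S eta) + dist md D (restr (~: S) eta).
Proof.
rewrite -lerBlDr; apply: lb_le_dist => a1 a1_1.
rewrite lerBlDr -lerBlDl; apply: lb_le_dist => a2 a2_1.
rewrite lerBlDl.
suff -> : norm2 md eta = norm2 md ((D - a1 *: restr S eta) - (D - a2 *: restr (~: S) eta)).
  exact: ler_norm2B.
apply: eq_norm2 => i; rewrite !mxE !inE; case: (i \in S) => /=.
  by rewrite mulr0 subr0 addrAC subrr add0r mdN mdM a1_1 mul1r.
by rewrite mulr0 subr0 subKr mdM a2_1 mul1r.
Qed.

Lemma sigma_le_norm2_restr s T eta : (#|T| <= s)%N ->
  sigma md s eta <= norm2 md (restr (~: T) eta).
Proof.
move=> Ts; apply: le_trans (sigma_le_dist eta (leq_trans (norm0_restr T eta) Ts)) _.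
by rewrite -subr_restr dist_le_norm2B.
Qed.

Lemma norm2_le_sigma s c0 eta : 0 < c0 ->
  (forall T, (#|T| <= s)%N -> norm2 md eta <= c0 * norm2 md (restr (~: T) eta)) ->
  norm2 md eta <= c0 * sigma md s eta.
Proof.
move=> c0_gt0 null_space_bound; rewrite -ler_pdivrMl //; apply: lb_le_sigma => z zs.
apply: lb_le_dist => c _; rewrite ler_pdivrMl //.
apply: le_trans (null_space_bound [set i | z i 0 != 0] zs) _; rewrite ler_pM2l //.
apply: ler_norm2 => i; rewrite !mxE !inE.
by case: eqP => [->|_] /=; rewrite ?mulr0 ?subr0 ?md0.
Qed.

Section Recovery.
Variables (m : nat) (A : 'M[F]_(m, n)) (k : nat).
Variables (Delta : 'cV[R]_m -> 'cV[F]_n) (c0 : R).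
Hypothesis c0_ge0 : 0 <= c0.
Hypothesis recovery :
  forall x, dist md (Delta (absv md (A *m x))) x <= c0 * sigma md k x.

Lemma recovery_null_space eta T : A *m eta = 0 -> (#|T| <= 2 * k)%N ->
  norm2 md eta <= c0 * norm2 md (restr (~: T) eta).
Proof.
move=> A_eta T_le; have [T1 sub_T1 /andP[T1_le T2_le]] := card_split_double T_le.
set u := restr T1 eta; set w := restr (~: T1) eta; set D := Delta (absv md (A *m u)).
have same_measurements : absv md (A *m w) = absv md (A *m u).
  by rewrite /w -subr_restr mulmxBr A_eta sub0r absvN.
have u_sparse : (norm0 u <= k)%N := leq_trans (norm0_restr _ _) T1_le.
have dist_u : dist md D u <= 0.
  by rewrite -(mulr0 c0) -(sigma_sparse u_sparse) recovery.
have dist_w : dist md D w <= c0 * norm2 md (restr (~: T) eta).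
  rewrite /D -same_measurements; apply: le_trans (recovery w) _; rewrite ler_wpM2l //.
  apply: le_trans (sigma_le_dist _ (leq_trans (norm0_restr _ eta) T2_le)) _.
  by rewrite -(restr_setCB _ sub_T1) dist_le_norm2B.
apply: le_trans (norm2_le_dist_restr D T1 eta) _.
by rewrite -[X in _ <= X]add0r; exact: lerD.
Qed.

End Recovery.

Lemma recovery_sigma_bound m (A : 'M[F]_(m, n)) k (Delta : 'cV[R]_m -> 'cV[F]_n) c0 :
  0 < c0 ->
  (forall x, dist md (Delta (absv md (A *m x))) x <= c0 * sigma md k x) ->
  forall eta, A *m eta = 0 -> forall T, (#|T| <= 2 * k)%N ->
  norm2 md eta <= c0 * sigma md (2 * k) eta /\
  c0 * sigma md (2 * k) eta <= c0 * norm2 md (restr (~: T) eta).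
Proof.
move=> c0_gt0 recovery eta A_eta T T_le; split.
  by apply: norm2_le_sigma => // T'; apply: recovery_null_space (ltW c0_gt0) recovery _ _ A_eta.
by rewrite ler_pM2l // sigma_le_norm2_restr.
Qed.

End Modulus.

Theorem mainTheorem6 (R : realType) :
  (forall (m n : nat) (A : 'M[R]_(m, n)) (k : nat),
     (1 <= k <= n)%N ->
     forall (Delta : 'cV[R]_m -> 'cV[R]_n) (c0 : R), 0 < c0 ->
     (forall x : 'cV[R]_n,
        dist (fun c : R => `|c|) (Delta (absv (fun c : R => `|c|) (A *m x))) x
        <= c0 * sigma (fun c : R => `|c|) k x) ->
     forall eta : 'cV[R]_n, A *m eta = 0 ->
     forall T : {set 'I_n}, (#|T| <= 2 * k)%N ->
       norm2 (fun c : R => `|c|) eta <= c0 * sigma (fun c : R => `|c|) (2 * k) eta /\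
       c0 * sigma (fun c : R => `|c|) (2 * k) eta
         <= c0 * norm2 (fun c : R => `|c|) (restr (~: T) eta))
  /\
  (forall (m n : nat) (A : 'M[R[i]]_(m, n)) (k : nat),
     (1 <= k <= n)%N ->
     forall (Delta : 'cV[R]_m -> 'cV[R[i]]_n) (c0 : R), 0 < c0 ->
     (forall x : 'cV[R[i]]_n,
        dist (@ComplexField.Normc.normc R) (Delta (absv (@ComplexField.Normc.normc R) (A *m x))) x
        <= c0 * sigma (@ComplexField.Normc.normc R) k x) ->
     forall eta : 'cV[R[i]]_n, A *m eta = 0 ->
     forall T : {set 'I_n}, (#|T| <= 2 * k)%N ->
       norm2 (@ComplexField.Normc.normc R) eta <= c0 * sigma (@ComplexField.Normc.normc R) (2 * k) eta /\
       c0 * sigma (@ComplexField.Normc.normc R) (2 * k) eta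
         <= c0 * norm2 (@ComplexField.Normc.normc R) (restr (~: T) eta)).
Proof.
split=> m n A k _; apply: recovery_sigma_bound.
- exact: normr0.
- exact: normr1.
- exact: normrN.
- exact: normrM.
- exact: ler_normD.
- exact: normr_ge0.
- exact: ComplexField.Normc.normc0.
- exact: ComplexField.Normc.normc1.
- exact: normcN.
- exact: ComplexField.Normc.normcM.
- exact: le_normcD.
- by case=> a b; exact: sqrtr_ge0.
Qed.
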